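(* Let $G_1$ and $G_2$ be graphs on $n$ nodes with Laplacian matrices $Q_1,Q_2$, let $k\in\{1,\dots,n\}$, and let $\hat B$ be an $n\times n$ zero-one matrix with exactly $k$ ones in every row and every column. For $p\ge 0$ let $$Q(p)=\begin{bmatrix} Q_1+kpI & -p\hat B\\ -p\hat B^T & Q_2+kpI\end{bmatrix},$$ with eigenvalues $0=\mu_N(p)\le \mu_{N-1}(p)\le\dots\le\mu_1(p)$, $N=2n$. Define the transition threshold $p^*=\sup\big(\{0\}\cup\{p>0:\ \mu_{N-1}(p)=2kp\}\big)$. Then $$p^*\le \frac{1}{k}\min\big(\mu_{n-1}(Q_1),\ \mu_{n-1}(Q_2)\big),$$ where $\mu_{n-1}(Q_i)$ denotes the second smallest eigenvalue (algebraic connectivity) of $Q_i$.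
   Context: $Q(p)$ is the Laplacian of the two-layer interdependent network with a $k$-to-$k$ interconnection of weight $p$; $2kp$ is always an eigenvalue of $Q(p)$ (eigenvector $[u^T,-u^T]^T$). The paper describes $p^*$ as the coupling value beyond which $\mu_{N-1}(p)\neq 2kp$; here it is formalized as the supremum above. *)

From HB Require Import structures.
From mathcomp Require Import all_boot all_order all_algebra.
From mathcomp Require Import boolp classical_sets reals.
From Stdlib Require Import ClassicalEpsilon.
Set Implicit Arguments. Unset Strict Implicit. Unset Printing Implicit Defensive.
Import Order.TTheory GRing.Theory Num.Theory.
Local Open Scope ring_scope.

Definition laplacian (R : ringType) (n : nat) (e : rel 'I_n) : 'M[R]_n :=
  \matrix_(i, j) (if i == j then (#|[set l | e i l]|)%:R else - (e i j)%:R).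

Definition is_spectrum (R : realFieldType) (m : nat) (A : 'M[R]_m) (s : seq R) :=
  sorted <=%R s /\ char_poly A = \prod_(x <- s) ('X - x%:P).

Definition spectrum (R : realFieldType) (m : nat) (A : 'M[R]_m) : seq R :=
  epsilon (inhabits [::]) (is_spectrum A).

(* eig_asc A i = the (i+1)-th smallest eigenvalue of A (0-based index i). *)
Definition eig_asc (R : realFieldType) (m : nat) (A : 'M[R]_m) (i : nat) : R :=
  nth 0 (spectrum A) i.

Definition supraQ (R : ringType) (n k : nat) (Q1 Q2 B : 'M[R]_n) (p : R)
  : 'M[R]_(n + n) :=
  block_mx (Q1 + (k%:R * p)%:M) (- (p *: B))
           (- (p *: B^T)) (Q2 + (k%:R * p)%:M).

Definition pstar (R : realType) (n k : nat) (Q1 Q2 B : 'M[R]_n) : R :=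
  sup ([set 0] `|` [set p | 0 < p /\ eig_asc (supraQ k Q1 Q2 B p) 1 = 2 * k%:R * p]).

From HB Require Import structures.
From mathcomp Require Import all_boot all_order all_algebra.
From mathcomp Require Import boolp classical_sets reals.
From mathcomp Require Import complex spectral sesquilinear.
From Stdlib Require Import ClassicalEpsilon.
(* Take p > 0 with mu_{N-1}(Q(p)) = 2kp.  The map y |-> [y, 0] is an isometric
   embedding of R^n into R^2n along which the quadratic form of Q(p) is that of
   Q1 + kp I.  By the min-max characterisation of the second smallest eigenvalue
   (a two-dimensional test space for the upper bound, a vector orthogonal to the
   first eigenvector for the lower bound), mu_{N-1}(Q(p)) <= mu_{n-1}(Q1) + kp, so
   kp <= mu_{n-1}(Q1); likewise for Q2.  The candidate p = 0 is harmless since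
   Laplacians are positive semidefinite.  The min-max argument is run over C,
   where real symmetric matrices are unitarily diagonalisable. *)

Set Implicit Arguments. Unset Strict Implicit. Unset Printing Implicit Defensive.
Import Order.TTheory GRing.Theory Num.Theory.
Local Open Scope ring_scope.
Local Open Scope sesquilinear_scope.
Local Open Scope complex_scope.

Local Notation "M ^C" := (map_mx (real_complex _) M) : ring_scope.

Lemma char_poly_similar (F : fieldType) n (A P : 'M[F]_n) : P \in unitmx ->
  char_poly (invmx P *m A *m P) = char_poly A.
Proof.
move=> Pu; rewrite /char_poly /char_poly_mx !map_mxM.
have XE : 'X%:M = map_mx polyC (invmx P) *m 'X%:M *m map_mx polyC P :> 'M_n.
  by rewrite scalar_mxC -mulmxA -map_mxM mulVmx // map_mx1 mulmx1.
rewrite [X in X - _]XE -mulmxBl -mulmxBr !det_mulmx mulrC mulrA -det_mulmx.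
by rewrite -map_mxM mulmxV // map_mx1 det1 mul1r.
Qed.

Section SymmetricSpectrum.
Variables (R : rcfType) (m : nat) (M : 'M[R]_m).

Lemma symmetric_unitary_diag : M^T = M ->
  exists (P : 'M[R[i]]_m) (d : 'I_m -> R),
    P \is unitarymx /\ M^C = invmx P *m diag_mx (\row_i (d i)%:C) *m P.
Proof.
move=> Msym; have Mh : M^C \is hermsymmx.
  apply: realsym_hermsym.
    by apply/eqP/matrixP => i j; rewrite expr0 scale1r !mxE -[in LHS]Msym mxE.
  by apply/mxOverP => i j; rewrite mxE complex_real.
have /orthomx_spectralP MP := hermitian_normalmx Mh.
have /mxOverP d_real := hermitian_spectral_diag_real Mh.
exists (spectralmx M^C), (fun i => complex.Re (spectral_diag M^C 0 i)).
split; first exact: spectral_unitarymx.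
rewrite {1}MP; congr (_ *m diag_mx _ *m _).
by apply/rowP => i; rewrite mxE RRe_real // ord1 d_real.
Qed.

Lemma char_poly_unitary_diag (P : 'M[R[i]]_m) (d : 'I_m -> R) :
  P \is unitarymx -> M^C = invmx P *m diag_mx (\row_i (d i)%:C) *m P ->
  char_poly M = \prod_i ('X - (d i)%:P).
Proof.
move=> Pu MP; apply: (@map_poly_inj _ _ (real_complex R)).
rewrite map_char_poly MP char_poly_similar ?unitarymx_unit //.
rewrite char_poly_trig ?diag_mx_is_trig // rmorph_prod; apply: eq_bigr => i _.
by rewrite !mxE eqxx mulr1n rmorphB /= map_polyX map_polyC.
Qed.

Lemma is_spectrum_spectrum : M^T = M -> is_spectrum M (spectrum M).
Proof.
move=> /symmetric_unitary_diag [P [d [Pu MP]]]; apply: epsilon_spec.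
exists (sort <=%R [seq d i | i <- enum 'I_m]); split; first exact/sort_sorted/le_total.
rewrite (char_poly_unitary_diag Pu MP) (perm_big _ (permEl (perm_sort _ _))).
by rewrite big_map big_enum.
Qed.

Lemma perm_eq_is_spectrum s (f : 'I_m -> R) :
  is_spectrum M s -> char_poly M = \prod_i ('X - (f i)%:P) ->
  perm_eq s [seq f i | i <- enum 'I_m].
Proof.
by move=> [_ Ms] Mf; apply: prod_XsubC_eq; rewrite -Ms Mf big_map big_enum.
Qed.

Lemma size_is_spectrum s : is_spectrum M s -> size s = m.
Proof.
by move=> [_ Ms]; have := size_char_poly M; rewrite Ms size_prod_XsubC => -[].
Qed.

Lemma eigenvalue_is_spectrum s x : is_spectrum M s -> x \in s -> eigenvalue M x.
Proof. by move=> [_ Ms] xs; rewrite eigenvalue_root_char Ms root_prod_XsubC. Qed.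

End SymmetricSpectrum.

Section SecondOfSortedPermutation.
Variables (R : realDomainType) (m : nat) (f : 'I_m -> R) (s : seq R).
Hypotheses (s_sorted : sorted <=%R s) (s_perm : perm_eq s [seq f i | i <- enum 'I_m]).
Hypothesis m_gt1 : (1 < m)%N.

Let count_s (a : pred R) : count a s = #|[pred i | a (f i)]|.
Proof. by rewrite (permP s_perm) count_map cardE size_filter enumT. Qed.

Lemma second_le_all_but_one : exists j0, forall j, j != j0 -> s`_1 <= f j.
Proof.
have : (count (< s`_1)%R s <= 1)%N.
  by rewrite leqNgt; apply/negP => /(nth_count_lt 0 s_sorted); rewrite ltxx.
rewrite count_s; case: (pickP [pred i | f i < s`_1]) => [j0 /= j0_lt|none] le1.
  exists j0 => j j_neq; rewrite leNgt; apply/negP => j_lt.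
  suff: (1 < #|[pred i | (f i < s`_1)%R]|)%N by rewrite ltnNge le1.
  by apply/card_gt1P; exists j, j0.
exists (Ordinal (ltnW m_gt1)) => j _; rewrite leNgt; apply/negP => j_lt.
by have := none j; rewrite /= j_lt.
Qed.

Lemma two_le_second : exists i0 i1, [/\ i0 != i1, f i0 <= s`_1 & f i1 <= s`_1].
Proof.
have size_s : size s = m by rewrite (perm_size s_perm) size_map size_enum_ord.
have : (1 < count (<= s`_1)%R s)%N.
  rewrite ltnNge; apply/negP => le1.
  by have := @nth_count_gt _ _ s`_1 0 s 1 s_sorted; rewrite le1 size_s m_gt1 ltxx => /(_ isT).
by rewrite count_s => /card_gt1P [i0 [i1 [? ? ?]]]; exists i0, i1.
Qed.

End SecondOfSortedPermutation.

Definition qform (C : numClosedFieldType) m (A : 'M[C]_m) (v : 'rV[C]_m) : C :=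
  (v *m A *m v ^t*) 0 0.

Lemma qform_mulmx (C : numClosedFieldType) m n (F : 'M[C]_(m, n)) A (y : 'rV_m) :
  qform A (y *m F) = qform (F *m A *m F ^t*) y.
Proof. by rewrite /qform trmx_mul map_mxM !mulmxA. Qed.

Lemma qformD_scalar (C : numClosedFieldType) m (A : 'M[C]_m) c y :
  qform (A + c%:M) y = qform A y + c * qform 1%:M y.
Proof.
rewrite /qform mulmxDr mulmxDl mxE; congr (_ + _).
by rewrite mul_mx_scalar mulmx1 -scalemxAl mxE.
Qed.

Section UnitaryDiag.
Variables (R : rcfType) (m : nat) (P : 'M[R[i]]_m) (d : 'I_m -> R).
Hypothesis P_unitary : P \is unitarymx.
Local Notation D := (diag_mx (\row_i (d i)%:C)).

Lemma qform_unitary_diag c :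
  qform (invmx P *m D *m P) (c *m P) = \sum_i (d i)%:C * (c 0 i * (c 0 i)^*).
Proof.
rewrite /qform invmx_unitary // trmx_mul map_mxM !mulmxA !mulmxtVK // mxE.
by apply: eq_bigr => i _; rewrite mul_mx_diag !mxE mulrAC mulrC.
Qed.

Lemma qform1_unitary c : qform 1%:M (c *m P) = \sum_i c 0 i * (c 0 i)^*.
Proof.
rewrite /qform mulmx1 trmx_mul map_mxM mulmxA mulmxtVK // mxE.
by apply: eq_bigr => i _; rewrite !mxE.
Qed.

End UnitaryDiag.

Section SecondEigenvalue.
Variables (R : rcfType) (m : nat) (M : 'M[R]_m).
Hypotheses (M_sym : M^T = M) (m_gt1 : (1 < m)%N).

Let spectral_data : exists (P : 'M[R[i]]_m) (d : 'I_m -> R), [/\ P \is unitarymx,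
  M^C = invmx P *m diag_mx (\row_i (d i)%:C) *m P,
  sorted <=%R (spectrum M) & perm_eq (spectrum M) [seq d i | i <- enum 'I_m]].
Proof.
have [P [d [Pu MP]]] := symmetric_unitary_diag M_sym.
have M_spec := is_spectrum_spectrum M_sym.
exists P, d; split=> //; first exact: proj1 M_spec.
exact: perm_eq_is_spectrum M_spec (char_poly_unitary_diag Pu MP).
Qed.

Lemma eig_asc1_le_qform (w1 w2 : 'rV[R[i]]_m) : exists a b : R[i],
  (a != 0) || (b != 0) /\
  (eig_asc M 1)%:C * qform 1%:M (a *: w1 + b *: w2) <= qform M^C (a *: w1 + b *: w2).
Proof.
have [P [d [Pu MP ss ps]]] := spectral_data.
have [j0 j0P] := second_le_all_but_one ss ps m_gt1.
(* coord v is the component of v along an eigenvector for the smallest eigenvalue;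
   killing it leaves only eigenvalues >= mu_2 in the Rayleigh quotient. *)
pose coord (v : 'rV[R[i]]_m) := (v *m P ^t*) 0 j0.
suff key a b : a * coord w1 + b * coord w2 = 0 ->
    (eig_asc M 1)%:C * qform 1%:M (a *: w1 + b *: w2) <= qform M^C (a *: w1 + b *: w2).
  have [w1_0|w1_neq0] := eqVneq (coord w1) 0.
    exists 1, 0; rewrite oner_eq0; split=> //.
    by apply: key; rewrite w1_0 mulr0 mul0r addr0.
  exists (coord w2), (- coord w1); rewrite oppr_eq0 w1_neq0 orbT; split=> //.
  by apply: key; rewrite mulrC mulNr addrN.
move=> ab0; set v := a *: w1 + b *: w2.
have vj0 : (v *m P ^t*) 0 j0 = 0 by rewrite -ab0 /coord /v mulmxDl -!scalemxAl !mxE.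
rewrite -(mulmxKtV v Pu erefl) MP qform_unitary_diag // qform1_unitary // mulr_sumr.
apply: ler_sum => i _; have [->|ij0] := eqVneq i j0; first by rewrite vj0 mul0r !mulr0.
by rewrite ler_wpM2r ?mul_conjC_ge0 // lecR j0P.
Qed.

Lemma qform_le_eig_asc1 : exists w1 w2 : 'rV[R[i]]_m, forall a b : R[i],
  qform 1%:M (a *: w1 + b *: w2) = a * a^* + b * b^* /\
  qform M^C (a *: w1 + b *: w2) <= (eig_asc M 1)%:C * (a * a^* + b * b^*).
Proof.
have [P [d [Pu MP ss ps]]] := spectral_data.
have [i0 [i1 [i01 di0 di1]]] := two_le_second ss ps m_gt1.
exists (delta_mx 0 i0 *m P), (delta_mx 0 i1 *m P) => a b.
pose c : 'rV[R[i]]_m := a *: delta_mx 0 i0 + b *: delta_mx 0 i1.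
have sum_c g : \sum_i g i * (c 0 i * (c 0 i)^*) = g i0 * (a * a^*) + g i1 * (b * b^*).
  rewrite (bigD1 i0) // (bigD1 i1) 1?eq_sym //= big1 ?addr0 => [|i /andP [i_i1 i_i0]].
    by rewrite !mxE !eqxx (negbTE i01) eq_sym (negbTE i01) !mulr1 !mulr0 addr0 add0r.
  by rewrite !mxE (negbTE i_i1) (negbTE i_i0) !mulr0 addr0 mul0r mulr0.
rewrite !scalemxAl -mulmxDl -/c MP qform_unitary_diag // qform1_unitary //.
split; last by rewrite sum_c mulrDr lerD // ler_wpM2r ?mul_conjC_ge0 // lecR.
by have := sum_c (fun=> 1); rewrite !mul1r => <-; apply: eq_bigr => i _; rewrite mul1r.
Qed.

End SecondEigenvalue.

Lemma map_real_complex_trC (R : rcfType) m n (E : 'M[R]_(m, n)) : E^C ^t* = E^T^C.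
Proof. by apply/matrixP => i j; rewrite !mxE conj_Creal // complex_real. Qed.

Lemma eig_asc1_le_compression (R : rcfType) n N (A : 'M[R]_n) (Q : 'M[R]_N)
    (E : 'M[R]_(n, N)) (c : R) :
  A^T = A -> Q^T = Q -> (1 < n)%N -> (1 < N)%N ->
  E *m E^T = 1%:M -> E *m Q *m E^T = A + c%:M ->
  eig_asc Q 1 <= eig_asc A 1 + c.
Proof.
move=> A_sym Q_sym n_gt1 N_gt1 E_iso EQE.
have qform1_E y : qform 1%:M (y *m E^C) = qform 1%:M y.
  by rewrite qform_mulmx mulmx1 map_real_complex_trC -map_mxM E_iso map_mx1.
have qformQ_E y : qform Q^C (y *m E^C) = qform A^C y + c%:C * qform 1%:M y.
  rewrite qform_mulmx map_real_complex_trC -!map_mxM EQE map_mxD map_scalar_mx.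
  exact: qformD_scalar.
have [w1 [w2 A_le]] := qform_le_eig_asc1 A_sym n_gt1.
have [a [b [ab_neq0 Q_ge]]] := eig_asc1_le_qform Q_sym N_gt1 (w1 *m E^C) (w2 *m E^C).
have [norm_ab qA_le] := A_le a b.
rewrite !scalemxAl -mulmxDl qform1_E qformQ_E norm_ab in Q_ge.
set t := a * a^* + b * b^* in Q_ge qA_le.
have t_gt0 : 0 < t.
  case/orP: ab_neq0 => [a_neq0|b_neq0].
    by apply: ltr_wpDr; [exact: mul_conjC_ge0 | rewrite mul_conjC_gt0].
  by apply: ltr_wpDl; [exact: mul_conjC_ge0 | rewrite mul_conjC_gt0].
rewrite -lecR rmorphD /= -(ler_pM2r t_gt0) mulrDl.
by apply: le_trans Q_ge _; rewrite lerD2r.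
Qed.

Lemma laplacian_sym (R : nzRingType) n (e : rel 'I_n) :
  symmetric e -> (laplacian R e)^T = laplacian R e.
Proof.
move=> e_sym; apply/matrixP => i j; rewrite !mxE eq_sym.
by case: eqP => [->|_] //; rewrite e_sym.
Qed.

Lemma mulmx_laplacian (R : comNzRingType) n (e : rel 'I_n) (v : 'rV[R]_n) b :
  symmetric e -> irreflexive e ->
  (v *m laplacian R e) 0 b = \sum_a (e a b)%:R * (v 0 b - v 0 a).
Proof.
move=> e_sym e_irr.
have deg_b : \sum_a (e a b)%:R = #|[set l | e b l]|%:R :> R.
  rewrite -natr_sum -sum1_card; congr _%:R; rewrite [RHS]big_mkcond /=.
  by apply: eq_bigr => a _; rewrite inE e_sym; case: (e b a).
have Lab a : laplacian R e a b = (a == b)%:R * #|[set l | e b l]|%:R - (e a b)%:R.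
  by rewrite mxE; have [->|_] := eqVneq a b; rewrite ?e_irr ?mul1r ?subr0 ?mul0r ?sub0r.
rewrite mxE; under eq_bigr => a _ do rewrite Lab mulrBr.
rewrite sumrB (bigD1 b) //= eqxx mul1r big1 ?addr0 => [|a /negbTE->]; last first.
  by rewrite mul0r mulr0.
under [in RHS]eq_bigr => a _ do rewrite mulrBr.
rewrite sumrB -mulr_suml deg_b mulrC; congr (_ - _).
by apply: eq_bigr => a _; rewrite mulrC.
Qed.

Lemma laplacian_eigenvalue_ge0 (R : realFieldType) n (e : rel 'I_n) x :
  symmetric e -> irreflexive e -> eigenvalue (laplacian R e) x -> 0 <= x.
Proof.
move=> e_sym e_irr /eigenvalueP [v vL v_neq0].
have [i0 vi0_neq0] : exists i, v 0 i != 0.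
  apply/existsP; apply: contraNT v_neq0 => /existsPn v0.
  by apply/eqP/rowP => i; rewrite mxE; apply/eqP/negPn/v0.
pose b := [arg max_(i > i0) `|v 0 i|]%O.
have b_max i : `|v 0 i| <= `|v 0 b|.
  by rewrite /b; case: (arg_maxP (fun i => `|v 0 i|) (isT : predT i0)) => j _; apply.
have vb_neq0 : v 0 b != 0.
  by rewrite -normr_gt0 (lt_le_trans _ (b_max i0)) ?normr_gt0.
have xvb : x * v 0 b ^+ 2 = \sum_a (e a b)%:R * (v 0 b ^+ 2 - v 0 a * v 0 b).
  have := mulmx_laplacian v b e_sym e_irr; rewrite vL mxE expr2 mulrA => ->.
  by rewrite mulr_suml; apply: eq_bigr => a _; rewrite -mulrA mulrBl.
suff : 0 <= x * v 0 b ^+ 2 by rewrite pmulr_lge0 // exprn_even_gt0.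
rewrite xvb; apply: sumr_ge0 => a _; rewrite mulr_ge0 // subr_ge0.
rewrite (le_trans (ler_norm _)) // normrM -real_normK ?num_real // expr2.
by rewrite ler_wpM2r.
Qed.

Lemma eig_asc_laplacian_ge0 (R : rcfType) n (e : rel 'I_n) i :
  symmetric e -> irreflexive e -> (i < n)%N -> 0 <= eig_asc (laplacian R e) i.
Proof.
move=> e_sym e_irr i_lt; have L_spec := is_spectrum_spectrum (laplacian_sym R e_sym).
apply: laplacian_eigenvalue_ge0 e_sym e_irr (eigenvalue_is_spectrum L_spec _).
by rewrite mem_nth // (size_is_spectrum L_spec).
Qed.

Section SupraLaplacian.
Variables (R : rcfType) (n k : nat) (Q1 Q2 B : 'M[R]_n) (p : R).
Hypotheses (Q1_sym : Q1^T = Q1) (Q2_sym : Q2^T = Q2) (n_gt1 : (1 < n)%N).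

Let supraQ_sym : (supraQ k Q1 Q2 B p)^T = supraQ k Q1 Q2 B p.
Proof.
rewrite /supraQ tr_block_mx !raddfD /= !raddfN /= !linearZ /= trmxK.
by rewrite !tr_scalar_mx Q1_sym Q2_sym.
Qed.

Let nn_gt1 : (1 < n + n)%N. Proof. exact: ltn_addr. Qed.

Lemma eig_asc1_supraQ_le_l : eig_asc (supraQ k Q1 Q2 B p) 1 <= eig_asc Q1 1 + k%:R * p.
Proof.
apply: (@eig_asc1_le_compression _ _ _ _ _ (row_mx 1%:M 0)) => //.
  by rewrite tr_row_mx mul_row_col trmx1 trmx0 mulmx1 mulmx0 addr0.
rewrite /supraQ mul_row_block !mul0mx !addr0 !mul1mx tr_row_mx mul_row_col.
by rewrite trmx1 trmx0 mulmx1 mulmx0 addr0.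
Qed.

Lemma eig_asc1_supraQ_le_r : eig_asc (supraQ k Q1 Q2 B p) 1 <= eig_asc Q2 1 + k%:R * p.
Proof.
apply: (@eig_asc1_le_compression _ _ _ _ _ (row_mx 0 1%:M)) => //.
  by rewrite tr_row_mx mul_row_col trmx1 trmx0 mulmx1 mulmx0 add0r.
rewrite /supraQ mul_row_block !mul0mx !add0r !mul1mx tr_row_mx mul_row_col.
by rewrite trmx1 trmx0 mulmx1 mulmx0 add0r.
Qed.

End SupraLaplacian.

Theorem mainTheorem2 (R : realType) (n k : nat) (e1 e2 : rel 'I_n) (B : 'M[R]_n) :
  (1 < n)%N ->
  symmetric e1 -> irreflexive e1 ->
  symmetric e2 -> irreflexive e2 ->
  (0 < k)%N -> (k <= n)%N ->
  (forall i j, B i j = 0 \/ B i j = 1) ->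
  (forall i, \sum_j B i j = k%:R) ->
  (forall j, \sum_i B i j = k%:R) ->
  pstar k (laplacian R e1) (laplacian R e2) B
    <= k%:R^-1 * Num.min (eig_asc (laplacian R e1) 1) (eig_asc (laplacian R e2) 1).
Proof.
move=> n_gt1 e1_sym e1_irr e2_sym e2_irr k_gt0 _ _ _ _.
have Q1_sym := laplacian_sym R e1_sym; have Q2_sym := laplacian_sym R e2_sym.
set Q1 := laplacian R e1 in Q1_sym *; set Q2 := laplacian R e2 in Q2_sym *.
have kp_le p : eig_asc (supraQ k Q1 Q2 B p) 1 = 2 * k%:R * p ->
    k%:R * p <= Num.min (eig_asc Q1 1) (eig_asc Q2 1).
  have two_kp : 2 * k%:R * p = k%:R * p + k%:R * p by rewrite -mulrA mulr_natl mulr2n.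
  rewrite two_kp => Qp; rewrite le_min; apply/andP.
  by split; rewrite -(lerD2r (k%:R * p)) -Qp ?eig_asc1_supraQ_le_l ?eig_asc1_supraQ_le_r.
apply: ge_sup => [|p [->|[_ /kp_le]]]; first by exists 0; left.
  by rewrite mulr_ge0 ?invr_ge0 // le_min !eig_asc_laplacian_ge0.
by rewrite ler_pdivlMl ?ltr0n.
Qed.
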